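(* For $m\ge1$, $\beta\in\mathbb{R}$ and $x\in(0,1)$ let $$\mathcal{F}_m(x,\beta)=e^{m\pi ix}e^{-2\pi i\beta x}\frac{\sin^m\pi x}{\pi^{m-1}}\frac{d^{m-1}}{dx^{m-1}}\Big((i-\cot\pi x)e^{2\pi i\beta x}\Big).$$ Then $\mathcal{F}_m(x,\beta)=F_m(e^{i\pi x},\beta)$, where $F_m(u,\beta)$ are the polynomials in $u$ defined by $F_1(u,\beta)=-1$ and, for $m\ge2$, $$F_m(u,\beta)=\big(\beta(u^2-1)-(m-1)u^2\big)F_{m-1}(u,\beta)+\frac{u(u^2-1)}{2}\frac{\partial}{\partial u}F_{m-1}(u,\beta).$$ *)

From HB Require Import structures.
From mathcomp Require Import all_boot all_order all_algebra.
From mathcomp Require Import all_classical all_reals all_analysis.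
From mathcomp Require Import complex.
Set Implicit Arguments. Unset Strict Implicit. Unset Printing Implicit Defensive.
Import Order.TTheory GRing.Theory Num.Theory.
Import numFieldNormedType.Exports.
Local Open Scope ring_scope.
Local Open Scope complex_scope.

Section Defs.
Variable R : realType.

Definition cexpi (t : R) : R[i] := (cos t) +i* (sin t).

Definition cot (t : R) : R := cos t / sin t.

Definition cderive_n (n : nat) (f : R -> R[i]) (x : R) : R[i] :=
  (derive1n n (fun t => complex.Re (f t)) x) +i* (derive1n n (fun t => complex.Im (f t)) x).

Definition calF (m : nat) (x beta : R) : R[i] :=
  cexpi (m%:R * pi * x) * cexpi (- (2 * pi * beta * x))
  * ((sin (pi * x)) ^+ m / pi ^+ m.-1)%:C
  * cderive_n m.-1
      (fun t => ('i - (cot (pi * t))%:C) * cexpi (2 * pi * beta * t)) x.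

(* Fpoly beta n = F_{n+1}(u, beta) as a polynomial in u:
   F_1 = -1,
   F_m = (beta (u^2-1) - (m-1) u^2) F_{m-1} + u (u^2-1)/2 * dF_{m-1}/du. *)
Fixpoint Fpoly (beta : R) (n : nat) : {poly R[i]} :=
  match n with
  | 0 => - 1
  | n'.+1 =>
      (beta%:C *: ('X ^+ 2 - 1) - (n'.+1)%:R *: 'X ^+ 2) * Fpoly beta n'
      + ('X * ('X ^+ 2 - 1)) * ((2%:R : R[i])^-1 *: (Fpoly beta n')^`())
  end.

Definition Fm (m : nat) (beta : R) : {poly R[i]} := Fpoly beta m.-1.

End Defs.

(* With u = e^{i pi x} and w = cot(pi x) - i one has w (u^2 - 1) = 2i,
   u sin(pi x) w = 1 and w' = -pi w (w + 2i).  Since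
   (i - cot(pi x)) e^{2 pi i beta x} = -w e^{2 pi i beta x}, induction on n shows that
   its n-th derivative is pi^n e^{2 pi i beta x} w^{n+1} F_{n+1}(u): differentiating
   and replacing 2i by w (u^2 - 1) turns the new bracket into w F_{n+2}(u), which is
   the recursion defining F.  In the prefactor of calF_m the exponentials in beta
   cancel and what is left is (u sin(pi x) w)^m F_m(u) = F_m(u). *)
From HB Require Import structures.
From mathcomp Require Import all_boot all_order all_algebra.
From mathcomp Require Import all_classical all_reals all_analysis.
From mathcomp Require Import complex.
From mathcomp Require Import ring.
Set Implicit Arguments. Unset Strict Implicit. Unset Printing Implicit Defensive.
Import Order.TTheory GRing.Theory Num.Theory.
Import numFieldNormedType.Exports.
Local Open Scope ring_scope.
Local Open Scope complex_scope.

Section ComplexParts.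
Variable R : fieldType.
Implicit Types a b : R[i].

Lemma ReD_complex a b : complex.Re (a + b) = complex.Re a + complex.Re b.
Proof. by case: a; case: b. Qed.

Lemma ImD_complex a b : complex.Im (a + b) = complex.Im a + complex.Im b.
Proof. by case: a; case: b. Qed.

Lemma ReM_complex a b :
  complex.Re (a * b) = complex.Re a * complex.Re b - complex.Im a * complex.Im b.
Proof. by case: a; case: b. Qed.

Lemma ImM_complex a b :
  complex.Im (a * b) = complex.Re a * complex.Im b + complex.Im a * complex.Re b.
Proof. by case: a; case: b. Qed.

Definition ReIm_complexE := (ReD_complex, ImD_complex, ReM_complex, ImM_complex).

Lemma complex_ext a b :
  complex.Re a = complex.Re b -> complex.Im a = complex.Im b -> a = b.
Proof. by case: a => ? ?; case: b => ? ? /= -> ->. Qed.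

End ComplexParts.

Section Derivatives.
Variable R : realType.

Lemma derive1n_is_derive_seq (A : set R) (f : R -> R) (h : nat -> R -> R) :
  open A -> (forall t, A t -> f t = h 0%N t) ->
  (forall n t, A t -> is_derive t 1 (h n) (h n.+1 t)) ->
  forall n t, A t -> derive1n n f t = h n t.
Proof.
move=> oA f_h0 dh; elim=> [|n IHn] t At; first exact: f_h0.
have nearA : \forall s \near t, A s by apply: open_nbhs_nbhs.
rewrite derive1nS derive1E (near_eq_derive _ (g := h n)).
  by case: (dh n t At).
by apply: filterS nearA => s; apply: IHn.
Qed.

Lemma is_derive_mull (k x : R) : is_derive x 1 ( *%R k) k.
Proof.
have -> : *%R k = k \*: id by [].
by apply: is_derive_eq (is_deriveZ k (is_derive_id x 1)) _; rewrite /GRing.scale /= mulr1.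
Qed.

Implicit Types (x : R) (f g : R -> R[i]).

Definition is_cderive x f (d : R[i]) :=
  is_derive x 1 (fun t => complex.Re (f t)) (complex.Re d) /\
  is_derive x 1 (fun t => complex.Im (f t)) (complex.Im d).

Lemma is_cderive_eq {x f a b} : is_cderive x f a -> a = b -> is_cderive x f b.
Proof. by move=> ? <-. Qed.

Lemma is_cderive_cst (c : R[i]) x : is_cderive x (fun=> c) 0.
Proof. by split; apply: is_derive_cst. Qed.

Lemma is_cderiveD {x f g a b} : is_cderive x f a -> is_cderive x g b ->
  is_cderive x (fun t => f t + g t) (a + b).
Proof.
move=> [fRe fIm] [gRe gIm]; split.
- under eq_fun do rewrite ReD_complex.
  by rewrite ReD_complex; apply: is_deriveD.
- under eq_fun do rewrite ImD_complex.
  by rewrite ImD_complex; apply: is_deriveD.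
Qed.

Lemma is_cderiveM {x f g a b} : is_cderive x f a -> is_cderive x g b ->
  is_cderive x (fun t => f t * g t) (f x * b + a * g x).
Proof.
move=> [fRe fIm] [gRe gIm]; split.
- under eq_fun do rewrite ReM_complex.
  apply: is_derive_eq (is_deriveB (is_deriveM fRe gRe) (is_deriveM fIm gIm)) _.
  by rewrite ReD_complex !ReM_complex /GRing.scale /=; ring.
- under eq_fun do rewrite ImM_complex.
  apply: is_derive_eq (is_deriveD (is_deriveM fRe gIm) (is_deriveM fIm gRe)) _.
  by rewrite ImD_complex !ImM_complex /GRing.scale /=; ring.
Qed.

Lemma is_cderive_horner (p : {poly R[i]}) {x f a} : is_cderive x f a ->
  is_cderive x (fun t => p.[f t]) (p^`().[f x] * a).
Proof.
move=> fa; elim/poly_ind: p => [|p c IHp].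
  under eq_fun do rewrite horner0.
  by rewrite deriv0 horner0 mul0r; apply: is_cderive_cst.
under eq_fun do rewrite hornerMXaddC.
apply: is_cderive_eq (is_cderiveD (is_cderiveM IHp fa) (is_cderive_cst c x)) _.
by rewrite derivMXaddC hornerD hornerMX; ring.
Qed.

Lemma is_cderiveX n {x f a} : is_cderive x f a ->
  is_cderive x (fun t => f t ^+ n) (n%:R * f x ^+ n.-1 * a).
Proof.
move=> /(is_cderive_horner 'X^n).
by under eq_fun do rewrite hornerXn; rewrite derivXn hornerMn hornerXn mulr_natl.
Qed.

Lemma is_cderive_cexpi k x :
  is_cderive x (fun t => cexpi (k * t)) ('i * k%:C * cexpi (k * x)).
Proof.
split.
- apply: is_derive_eq (is_derive1_comp (is_derive_cos (k * x)) (is_derive_mull k x)) _.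
  by rewrite !ReM_complex /=; ring.
- apply: is_derive_eq (is_derive1_comp (is_derive_sin (k * x)) (is_derive_mull k x)) _.
  by rewrite !ImM_complex !ReM_complex /=; ring.
Qed.

Lemma cderive_n_is_cderive_seq (A : set R) g (h : nat -> R -> R[i]) :
  open A -> (forall t, A t -> g t = h 0%N t) ->
  (forall n t, A t -> is_cderive t (h n) (h n.+1 t)) ->
  forall n t, A t -> cderive_n n g t = h n t.
Proof.
move=> oA g_h0 dh n t At.
have dRe m s : A s -> is_derive s 1 (fun r => complex.Re (h m r)) (complex.Re (h m.+1 s)).
  by move=> /(dh m)[].
have dIm m s : A s -> is_derive s 1 (fun r => complex.Im (h m r)) (complex.Im (h m.+1 s)).
  by move=> /(dh m)[].
rewrite /cderive_n (derive1n_is_derive_seq oA _ dRe n At);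
  last by move=> s /g_h0 ->.
rewrite (derive1n_is_derive_seq oA _ dIm n At); last by move=> s /g_h0 ->.
by case: (h n t).
Qed.

End Derivatives.

Section Trigonometry.
Variable R : realType.
Implicit Types a b y : R.

Lemma cexpi0 : cexpi 0 = 1 :> R[i].
Proof. by rewrite /cexpi cos0 sin0. Qed.

Lemma cexpiD a b : cexpi (a + b) = cexpi a * cexpi b.
Proof. by apply: complex_ext; rewrite /cexpi !ReIm_complexE /= ?cosD ?sinD; ring. Qed.

Lemma cexpiN_mul a : cexpi (- a) * cexpi a = 1.
Proof. by rewrite -cexpiD addNr cexpi0. Qed.

Lemma cexpi_natM (k : nat) a : cexpi (k%:R * a) = cexpi a ^+ k.
Proof.
elim: k => [|k IHk]; first by rewrite mul0r cexpi0 expr0.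
by rewrite -addn1 natrD mulrDl mul1r cexpiD IHk exprD expr1.
Qed.

Lemma sin_pi_mul_neq0 (t : R) : 0 < t < 1 -> sin (pi * t) != 0.
Proof.
move=> /andP[t_gt0 t_lt1]; apply/lt0r_neq0/sin_gt0_pi.
by rewrite mulr_gt0 ?pi_gt0 //= -[ltRHS]mulr1 ltr_pM2l ?pi_gt0.
Qed.

Lemma is_derive_cot y : sin y != 0 -> is_derive y 1 (@cot R) (- cot y ^+ 2 - 1).
Proof.
move=> s0; have dcot := is_deriveM (is_derive_cos y) (is_deriveV s0 (is_derive_sin y)).
by apply: is_derive_eq dcot _; rewrite /GRing.scale /= /cot; field.
Qed.

Definition cotBi (y : R) : R[i] := (cot y)%:C - 'i.

Lemma cexpiBN y : cexpi y - cexpi (- y) = 2 * 'i * (sin y)%:C.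
Proof.
by apply: complex_ext; rewrite /cexpi cosN sinN !ReIm_complexE /=; ring.
Qed.

Lemma cotBi_sin y : sin y != 0 -> cotBi y * (sin y)%:C = cexpi (- y).
Proof.
move=> s0; apply: complex_ext; rewrite /cotBi /cexpi cosN sinN !ReIm_complexE /=.
  by rewrite subr0 mulr0 subr0 /cot divfK.
by ring.
Qed.

Lemma cexpi_sin_cotBi y : sin y != 0 -> cexpi y * (sin y)%:C * cotBi y = 1.
Proof. by move=> s0; rewrite -mulrA [_ * cotBi y]mulrC cotBi_sin // mulrC cexpiN_mul. Qed.

Lemma cotBi_cexpi_sqr y : sin y != 0 -> cotBi y * (cexpi y ^+ 2 - 1) = 2 * 'i.
Proof.
move=> s0; have -> : cexpi y ^+ 2 - 1 = cexpi y * (cexpi y - cexpi (- y)).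
  by rewrite mulrBr -expr2 [cexpi y * _]mulrC cexpiN_mul.
rewrite cexpiBN.
transitivity (2 * 'i * (cotBi y * (sin y)%:C * cexpi y)); first ring.
by rewrite cotBi_sin // cexpiN_mul mulr1.
Qed.

Lemma is_cderive_cotBi (k t : R) : sin (k * t) != 0 ->
  is_cderive t (fun s => cotBi (k * s))
    (- k%:C * cotBi (k * t) * (cotBi (k * t) + 2 * 'i)).
Proof.
move=> s0; split.
- under eq_fun do rewrite /cotBi /= oppr0 addr0.
  apply: is_derive_eq (is_derive1_comp (is_derive_cot s0) (is_derive_mull k t)) _.
  by rewrite /cotBi !ReIm_complexE /=; ring.
- under eq_fun do rewrite /cotBi /= add0r.
  apply: is_derive_eq (is_derive_cst (-1 : R) t 1) _.
  by rewrite /cotBi !ReIm_complexE /=; ring.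
Qed.

End Trigonometry.

Section CotKernel.
Variables (R : realType) (beta : R).

Definition cot_kernel (t : R) : R[i] :=
  ('i - (cot (pi * t))%:C) * cexpi (2 * pi * beta * t).

Definition cot_kernel_derivative (n : nat) (t : R) : R[i] :=
  (pi ^+ n)%:C * cexpi (2 * pi * beta * t) * cotBi (pi * t) ^+ n.+1
  * (Fpoly beta n).[cexpi (pi * t)].

Lemma cot_kernel_derivative0 (t : R) : cot_kernel t = cot_kernel_derivative 0 t.
Proof.
by rewrite /cot_kernel /cot_kernel_derivative /cotBi /= hornerN hornerC; ring.
Qed.

Lemma is_cderive_cot_kernel_derivative n (t : R) : sin (pi * t) != 0 ->
  is_cderive t (cot_kernel_derivative n) (cot_kernel_derivative n.+1 t).
Proof.
move=> s0.
have dE := is_cderive_cexpi (2 * pi * beta) t.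
have dW := is_cderiveX n.+1 (is_cderive_cotBi s0).
have dP := is_cderive_horner (Fpoly beta n) (is_cderive_cexpi pi t).
apply: is_cderive_eq (is_cderiveM (is_cderiveM (is_cderiveM
  (is_cderive_cst (pi ^+ n)%:C t) dE) dW) dP) _.
have := cotBi_cexpi_sqr s0.
rewrite /cot_kernel_derivative [Fpoly _ n.+1]/=.
rewrite !(hornerD, hornerN, hornerM, hornerZ, hornerX, hornerXn, hornerC).
have piS : (pi ^+ n.+1)%:C = (pi ^+ n)%:C * pi%:C :> R[i] by rewrite exprSr rmorphM.
have pibeta : (2 * pi * beta)%:C = 2 * pi%:C * beta%:C :> R[i].
  by rewrite !rmorphM rmorph_nat.
rewrite piS pibeta succnK.
set w := cotBi _; set u := cexpi (pi * t); set e := cexpi _.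
move: (Fpoly beta n).[u] (Fpoly beta n)^`().[u] => p p' w_u2B1.
(* The goal's ['i] is the [ring_scope] one; under [:> R[i]] a bare ['i] would
   be read in [complex_scope] as a different (convertible) term. *)
have -> : 'i%R = w * (u ^+ 2 - 1) / 2 :> R[i].
  by rewrite w_u2B1 mulrAC divff ?mul1r ?pnatr_eq0.
by rewrite !exprS; field.
Qed.

Lemma cderive_n_cot_kernel n (t : R) : 0 < t < 1 ->
  cderive_n n cot_kernel t = cot_kernel_derivative n t.
Proof.
move=> t01.
apply: (cderive_n_is_cderive_seq (A := [set s : R | 0 < s < 1]%classic)) => //.
- by move=> s s01; apply: (near_in_itvoo (a := 0) (b := 1)); rewrite in_itv.
- by move=> s _; apply: cot_kernel_derivative0.
- by move=> m s /sin_pi_mul_neq0 /is_cderive_cot_kernel_derivative.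
Qed.

End CotKernel.

Theorem theorem4p4 (R : realType) (m : nat) (beta x : R) :
  (1 <= m)%N -> 0 < x < 1 ->
  calF m x beta = (Fm m beta).[cexpi (pi * x)].
Proof.
case: m => // n _ x01.
rewrite /calF /Fm /= (cderive_n_cot_kernel _ _ x01) /cot_kernel_derivative.
rewrite -[n.+1%:R * pi * x]mulrA cexpi_natM.
set u := cexpi (pi * x); set s := sin (pi * x); set w := cotBi (pi * x).
have usw : u * s%:C * w = 1 := cexpi_sin_cotBi (sin_pi_mul_neq0 x01).
have pinK : (s ^+ n.+1 / pi ^+ n)%:C * (pi ^+ n)%:C = s%:C ^+ n.+1.
  by rewrite -rmorphM /= divfK ?rmorphXn // expf_neq0 // lt0r_neq0 ?pi_gt0.
have eK := cexpiN_mul (2 * pi * beta * x).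
move: pinK eK; set A := (_ / _)%:C; set B := (pi ^+ n)%:C.
set e := cexpi (2 * pi * beta * x); set e' := cexpi (- _) => pinK eK.
transitivity (e' * e * (u ^+ n.+1 * (A * B) * w ^+ n.+1) * (Fpoly beta n).[u]).
  by ring.
by rewrite eK pinK mul1r -!exprMn usw expr1n mul1r.
Qed.
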